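(* Let $(\mathsf{C},\otimes,I)$ be an additive symmetric monoidal category and $A$ an object. For all $n\ge1$ and $0\le k\le n-1$, $\mathsf{unsh}(n+1,k+1)_A=\mathsf{unsh}(n,k+1)_A\otimes 1_A+\mathsf{unsh}(n,k)_A\otimes 1_A;1_{A^{\otimes k}}\otimes\gamma_{A^{\otimes(n-k)},A}$ as morphisms $A^{\otimes(n+1)}\to A^{\otimes(n+1)}$.
   Context: Composition is written $f;g$ (first $f$ then $g$); the monoidal structure is treated as strict, $\gamma$ is the symmetry. An additive symmetric monoidal category is a symmetric monoidal category whose hom-sets are commutative monoids with composition and $\otimes$ preserving $0$ and $+$ in each argument. For $\sigma\in S_n$, $\overline{\sigma}_{A,\dots,A}\colon A^{\otimes n}\to A^{\otimes n}$ is the canonical symmetry isomorphism moving the $i$-th factor to position $\sigma(i)$ (identity for $n\le1$). A $(k,l)$-unshuffle is a permutation $\sigma\in S_{k+l}$ with $\sigma^{-1}(1)<\dots<\sigma^{-1}(k)$ and $\sigma^{-1}(k+1)<\dots<\sigma^{-1}(k+l)$; $\mathsf{Unsh}(n,k)$ is the set of $(k,n-k)$-unshuffles and $\mathsf{unsh}(n,k)_A:=\sum_{\sigma\in\mathsf{Unsh}(n,k)}\overline{\sigma}_{A,\dots,A}$. *)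

From HB Require Import structures.
From mathcomp Require Import all_boot all_order all_algebra all_fingroup.
Set Implicit Arguments. Unset Strict Implicit. Unset Printing Implicit Defensive.
Import GRing.Theory.
Local Open Scope ring_scope.

(* transport of a morphism along equalities of objects
   (needed because strictness is a propositional equality of objects) *)
Definition castH {O : Type} (H : O -> O -> Type) {X X' Y Y' : O}
  (e1 : X = X') (e2 : Y = Y') (f : H X Y) : H X' Y' :=
  match e1 in _ = X1, e2 in _ = Y1 return H X1 Y1 with erefl, erefl => f end.
Arguments castH {O} H {X X' Y Y'} e1 e2 f.

(* Composition [cmp f g] is "f ; g" (first f then g). *)
Record ASMCdata := {
  Ob : Type;
  Mor : Ob -> Ob -> nmodType;
  cmp : forall X Y Z, Mor X Y -> Mor Y Z -> Mor X Z;
  idmor : forall X, Mor X X;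
  tens : Ob -> Ob -> Ob;
  Iob : Ob;
  tensm : forall X X' Y Y', Mor X X' -> Mor Y Y' -> Mor (tens X Y) (tens X' Y');
  gam : forall X Y, Mor (tens X Y) (tens Y X);
}.

Arguments cmp {_ _ _ _}. Arguments idmor {_}. Arguments tens {_}.
Arguments Iob {_}. Arguments tensm {_ _ _ _ _}. Arguments gam {_}.
Arguments Mor : clear implicits.

Record is_ASMC (C : ASMCdata) : Prop := {
  comp_idl : forall (X Y : Ob C) (f : Mor C X Y), cmp (idmor X) f = f;
  comp_idr : forall (X Y : Ob C) (f : Mor C X Y), cmp f (idmor Y) = f;
  compA : forall (X Y Z W : Ob C) (f : Mor C X Y) (g : Mor C Y Z) (h : Mor C Z W),
      cmp f (cmp g h) = cmp (cmp f g) h;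
  tensm_id : forall (X Y : Ob C), tensm (idmor X) (idmor Y) = idmor (tens X Y);
  tensm_comp : forall (X X' X'' Y Y' Y'' : Ob C) (f : Mor C X X') (f' : Mor C X' X'')
      (g : Mor C Y Y') (g' : Mor C Y' Y''),
      tensm (cmp f f') (cmp g g') = cmp (tensm f g) (tensm f' g');
  tensA : forall (X Y Z : Ob C), tens (tens X Y) Z = tens X (tens Y Z);
  tens1l : forall (X : Ob C), tens Iob X = X;
  tens1r : forall (X : Ob C), tens X Iob = X;
  tensmA : forall (X X' Y Y' Z Z' : Ob C) (f : Mor C X X') (g : Mor C Y Y') (h : Mor C Z Z'),
      castH (fun P Q => Mor C P Q : Type) (tensA X Y Z) (tensA X' Y' Z')
        (tensm (tensm f g) h) = tensm f (tensm g h);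
  tensm1l : forall (X X' : Ob C) (f : Mor C X X'),
      castH (fun P Q => Mor C P Q : Type) (tens1l X) (tens1l X')
        (tensm (idmor Iob) f) = f;
  tensm1r : forall (X X' : Ob C) (f : Mor C X X'),
      castH (fun P Q => Mor C P Q : Type) (tens1r X) (tens1r X')
        (tensm f (idmor Iob)) = f;
  sym_nat : forall (X X' Y Y' : Ob C) (f : Mor C X X') (g : Mor C Y Y'),
      cmp (tensm f g) (gam X' Y') = cmp (gam X Y) (tensm g f);
  sym_inv : forall (X Y : Ob C), cmp (gam X Y) (gam Y X) = idmor (tens X Y);
  hexagon1 : forall (X Y Z : Ob C),
      gam X (tens Y Z) =
      castH (fun P Q => Mor C P Q : Type) erefl (esym (tensA Y Z X))
        (cmp (castH (fun P Q => Mor C P Q : Type) (tensA X Y Z) (tensA Y X Z)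
                 (tensm (gam X Y) (idmor Z)))
              (tensm (idmor Y) (gam X Z)));
  hexagon2 : forall (X Y Z : Ob C),
      gam (tens X Y) Z =
      castH (fun P Q => Mor C P Q : Type) erefl (tensA Z X Y)
        (cmp (castH (fun P Q => Mor C P Q : Type)
                 (esym (tensA X Y Z)) (esym (tensA X Z Y))
                 (tensm (idmor X) (gam Y Z)))
              (tensm (gam X Z) (idmor Y)));
  comp0l : forall (X Y Z : Ob C) (g : Mor C Y Z), cmp (0 : Mor C X Y) g = 0;
  comp0r : forall (X Y Z : Ob C) (f : Mor C X Y), cmp f (0 : Mor C Y Z) = 0;
  compDl : forall (X Y Z : Ob C) (f f' : Mor C X Y) (g : Mor C Y Z),
      cmp (f + f') g = cmp f g + cmp f' g;
  compDr : forall (X Y Z : Ob C) (f : Mor C X Y) (g g' : Mor C Y Z),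
      cmp f (g + g') = cmp f g + cmp f g';
  tensm0l : forall (X X' Y Y' : Ob C) (g : Mor C Y Y'), tensm (0 : Mor C X X') g = 0;
  tensm0r : forall (X X' Y Y' : Ob C) (f : Mor C X X'), tensm f (0 : Mor C Y Y') = 0;
  tensmDl : forall (X X' Y Y' : Ob C) (f f' : Mor C X X') (g : Mor C Y Y'),
      tensm (f + f') g = tensm f g + tensm f' g;
  tensmDr : forall (X X' Y Y' : Ob C) (f : Mor C X X') (g g' : Mor C Y Y'),
      tensm f (g + g') = tensm f g + tensm f g'
}.

Record ASMC := { asmc_data :> ASMCdata; asmc_ax : is_ASMC asmc_data }.

Section Powers.
Variables (C : ASMC) (A : Ob C).

Let tA := tensA (asmc_ax C).
Let t1r := tens1r (asmc_ax C).

(* A^{(x)n} = (...((I (x) A) (x) A)...) (x) A ; by strictness this is A (x) ... (x) A *)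
Fixpoint pw (n : nat) : Ob C :=
  match n with 0 => Iob | m.+1 => tens (pw m) A end.

Lemma pw_add a b : tens (pw a) (pw b) = pw (a + b)%N.
Proof.
elim: b => [|b IH] /=; first by rewrite addn0 t1r.
by rewrite -tA IH addnS.
Qed.

(* cast between tensor powers along an equality of exponents (0 if unequal) *)
Definition castN (a b a' b' : nat) (f : Mor C (pw a) (pw a')) : Mor C (pw b) (pw b') :=
  match a =P b, a' =P b' with
  | ReflectT e1, ReflectT e2 =>
      castH (fun P Q => Mor C P Q : Type) (f_equal pw e1) (f_equal pw e2) f
  | _, _ => 0
  end.


Definition shiftl (k m : nat) : Mor C (pw (k + m.+1)%N) (pw (k.+1 + m)%N) :=
  castH (fun P Q => Mor C P Q : Type) (pw_add k m.+1)
    (eq_trans (esym (tA (pw k) A (pw m))) (pw_add k.+1 m))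
    (tensm (idmor (pw k)) (gam (pw m) A)).

(* 1_{A^{(x)k}} (x) gamma_{A^{(x)(n-k)}, A} : A^{(x)(n+1)} -> A^{(x)(n+1)}
   (meaningful for k <= n) *)
Definition id_tens_sym (n k : nat) : Mor C (pw n.+1) (pw n.+1) :=
  @castN (k + (n - k).+1)%N n.+1 (k.+1 + (n - k))%N n.+1 (shiftl k (n - k)).

(* restriction of sigma in S_{n+1} to the first n factors:
   tau i = unbump (sigma n) (sigma i) *)
Definition restr_fun n (s : 'S_n.+1) (i : 'I_n) : 'I_n :=
  odflt i (unlift (s ord_max) (s (lift ord_max i))).

Lemma restr_fun_some n (s : 'S_n.+1) i :
  unlift (s ord_max) (s (lift ord_max i)) = Some (restr_fun s i).
Proof.
rewrite /restr_fun; case: unliftP => [j _|] //=.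
by move/perm_inj/eqP; rewrite eq_sym (negbTE (neq_lift _ _)).
Qed.

Lemma unlift_eq n (h y : 'I_n) x : unlift h y = Some x -> y = lift h x.
Proof. by case: unliftP => [j -> [<-]|]. Qed.

Lemma restr_fun_inj n (s : 'S_n.+1) : injective (restr_fun s).
Proof.
move=> i1 i2 H.
have E1 := unlift_eq (restr_fun_some s i1).
have E2 := unlift_eq (restr_fun_some s i2).
by move: E1; rewrite H -E2 => /perm_inj /lift_inj.
Qed.

Definition restr n (s : 'S_n.+1) : 'S_n := perm (@restr_fun_inj n s).

(* the canonical symmetry  \overline{sigma} : A^{(x)n} -> A^{(x)n},
   moving the i-th factor to position sigma(i) (0-based indices);
   built recursively: first permute the first n factors by the restriction
   of sigma, then move the last factor to position sigma(n). *)
Fixpoint symperm (n : nat) : 'S_n -> Mor C (pw n) (pw n) :=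
  match n with
  | 0 => fun _ => idmor (pw 0)
  | m.+1 => fun s =>
      cmp (tensm (symperm (restr s)) (idmor A)) (id_tens_sym m (s ord_max))
  end.

(* (k, n-k)-unshuffles (0-based): sigma^{-1} increasing on [0,k) and on [k,n) *)
Definition is_unsh (n k : nat) (s : 'S_n) : bool :=
  [forall i : 'I_n, forall j : 'I_n,
     ((i < j)%N && ((j < k)%N || (k <= i)%N)) ==> ((s^-1)%g i < (s^-1)%g j)%N].

Definition unsh (n k : nat) : Mor C (pw n) (pw n) :=
  \sum_(s : 'S_n | is_unsh k s) symperm s.

End Powers.

(* Every sigma in S_(n+1) factors uniquely as lift_perm ord_max j t with t in S_n
   and j = sigma(n), and symperm sigma is then (symperm t (x) 1_A) ; id_tens_sym n j.
   Such a sigma is a (k+1, n-k)-unshuffle exactly when either j = n and t is a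
   (k+1, n-k-1)-unshuffle, or j = k and t is a (k, n-k)-unshuffle: the last factor
   must land at the end of one of the two blocks. Summing over the two cases gives
   the two terms, the case j = n contributing 1_A (x) gamma_(I,A) = 1, which holds
   because gamma_(I,A) is an idempotent (hexagon axiom) with inverse gamma_(A,I). *)
From Pilot Require Import Defs.
From mathcomp Require Import all_boot all_order all_algebra all_fingroup zify.
From Stdlib Require Import ProofIrrelevance.
Set Implicit Arguments. Unset Strict Implicit. Unset Printing Implicit Defensive.
Import GRing.Theory.
Local Open Scope ring_scope.

Section HeterogeneousEquality.
Variable C : ASMC.
Let ax := asmc_ax C.
Notation MC := (fun P Q : Ob C => Mor C P Q : Type).

Definition heq {X Y X' Y' : Ob C} (f : Mor C X Y) (g : Mor C X' Y') : Prop :=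
  exists (e1 : X = X') (e2 : Y = Y'), castH MC e1 e2 f = g.

Lemma heq_refl X Y (f : Mor C X Y) : heq f f.
Proof. by exists erefl, erefl. Qed.

Lemma heq_castr X Y X' Y' (e1 : X = X') (e2 : Y = Y') (f : Mor C X Y) :
  heq f (castH MC e1 e2 f).
Proof. by exists e1, e2. Qed.

Lemma heq_sym X Y X' Y' (f : Mor C X Y) (g : Mor C X' Y') : heq f g -> heq g f.
Proof. by case=> e1 [e2 Hg]; subst g; case: X' / e1; case: Y' / e2; apply: heq_refl. Qed.

Lemma heq_castl X Y X' Y' (e1 : X = X') (e2 : Y = Y') (f : Mor C X Y) :
  heq (castH MC e1 e2 f) f.
Proof. exact/heq_sym/heq_castr. Qed.

Lemma heq_trans X Y X' Y' X'' Y'' (f : Mor C X Y) (g : Mor C X' Y')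
  (h : Mor C X'' Y'') : heq f g -> heq g h -> heq f h.
Proof.
case=> e1 [e2 Hg]; subst g; case: X' / e1; case: Y' / e2.
by case=> e1 [e2 Hh]; subst h; case: X'' / e1; case: Y'' / e2; apply: heq_refl.
Qed.

Lemma heq_eq X Y (f g : Mor C X Y) : heq f g -> f = g.
Proof.
case=> e1 [e2 Hg]; subst g.
by rewrite (proof_irrelevance _ e1 erefl) (proof_irrelevance _ e2 erefl).
Qed.

Lemma heq_cmp X Y Z X' Y' Z' (f : Mor C X Y) (g : Mor C Y Z)
  (f' : Mor C X' Y') (g' : Mor C Y' Z') :
  heq f f' -> heq g g' -> heq (cmp f g) (cmp f' g').
Proof.
case=> e1 [e2 Hf]; subst f'; case: X' / e1; case: Y' / e2 in g' *.
case=> e1 [e2 Hg]; subst g'; case: Z' / e2.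
by rewrite (proof_irrelevance _ e1 erefl); apply: heq_refl.
Qed.

Lemma heq_tensm X X' Y Y' X1 X1' Y1 Y1' (f : Mor C X X') (g : Mor C Y Y')
  (f1 : Mor C X1 X1') (g1 : Mor C Y1 Y1') :
  heq f f1 -> heq g g1 -> heq (tensm f g) (tensm f1 g1).
Proof.
case=> e1 [e2 Hf]; subst f1; case: X1 / e1; case: X1' / e2.
case=> e1 [e2 Hg]; subst g1; case: Y1 / e1; case: Y1' / e2.
exact: heq_refl.
Qed.

Lemma heq_id X X' : X = X' -> heq (idmor X) (idmor X').
Proof. by move=> ->; apply: heq_refl. Qed.

Lemma heq_gam X X' Y Y' : X = X' -> Y = Y' -> heq (gam X Y) (gam X' Y').
Proof. by move=> -> ->; apply: heq_refl. Qed.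

Lemma heq_tensm1l X X' (f : Mor C X X') : heq (tensm (idmor Iob) f) f.
Proof. by exists (tens1l ax X), (tens1l ax X'); rewrite (tensm1l ax). Qed.

Lemma heq_tensm1r X X' (f : Mor C X X') : heq (tensm f (idmor Iob)) f.
Proof. by exists (tens1r ax X), (tens1r ax X'); rewrite (tensm1r ax). Qed.

Section UnitSymmetry.
Variable A : Ob C.

Let gamIA : Mor C A A := castH MC (tens1l ax A) (tens1r ax A) (gam Iob A).
Let gamAI : Mor C A A := castH MC (tens1r ax A) (tens1l ax A) (gam A Iob).

Let gamIA_idem : gamIA = cmp gamIA gamIA.
Proof.
apply: heq_eq.
have gamIIA : heq (gam (tens Iob Iob) A) gamIA.
  by apply: heq_trans (heq_castr _ _ _); apply: heq_gam; rewrite ?(tens1l ax).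
apply: heq_trans (heq_sym gamIIA) _; rewrite (hexagon2 ax).
apply: heq_trans (heq_castl _ _ _) _; apply: heq_cmp.
  apply: heq_trans (heq_castl _ _ _) _.
  exact: heq_trans (heq_tensm1l _) (heq_castr _ _ _).
exact: heq_trans (heq_tensm1r _) (heq_castr _ _ _).
Qed.

Let gamIAK : cmp gamIA gamAI = idmor A.
Proof.
apply: heq_eq; apply: heq_trans (_ : heq _ (cmp (gam Iob A) (gam A Iob))) _.
  by apply: heq_cmp; apply: heq_castl.
by rewrite (sym_inv ax); apply/heq_id/(tens1l ax).
Qed.

Lemma heq_gam1l : heq (gam Iob A) (idmor A).
Proof.
suff <- : gamIA = idmor A by apply: heq_castr.
by rewrite -gamIAK {2}gamIA_idem -(Defs.compA ax) gamIAK (comp_idr ax).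
Qed.

End UnitSymmetry.
End HeterogeneousEquality.

Lemma ltn_lift n (h : 'I_n.+1) (i j : 'I_n) : (lift h i < lift h j)%N = (i < j)%N.
Proof. by rewrite /= !ltnNge leq_bump2. Qed.

Lemma restr_lift_perm n (t : 'S_n) (j : 'I_n.+1) : restr (lift_perm ord_max j t) = t.
Proof.
by apply/permP => i; rewrite permE /restr_fun lift_perm_lift lift_perm_id liftK.
Qed.

Lemma lift_perm_restr n (s : 'S_n.+1) : lift_perm ord_max (s ord_max) (restr s) = s.
Proof.
apply/permP => i; case: (unliftP ord_max i) => [q ->|->]; last exact: lift_perm_id.
by rewrite lift_perm_lift permE -(unlift_eq (restr_fun_some s q)).
Qed.

Lemma big_perm_lift (V : nmodType) n (P : pred 'S_n.+1) (F : 'S_n.+1 -> V) :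
  \sum_(s | P s) F s =
  \sum_(t : 'S_n) \sum_(j | P (lift_perm ord_max j t)) F (lift_perm ord_max j t).
Proof.
rewrite pair_big_dep (reindex (fun p : 'S_n * 'I_n.+1 => lift_perm ord_max p.2 p.1)) //.
exists (fun s => (restr s, s ord_max)) => [[t j] _ | s _] /=.
  by rewrite restr_lift_perm lift_perm_id.
exact: lift_perm_restr.
Qed.

Lemma is_unshP n k (s : 'S_n) :
  reflect (forall i j : 'I_n, (i < j)%N -> (i < k)%N = (j < k)%N ->
             ((s^-1)%g i < (s^-1)%g j)%N)
          (is_unsh k s).
Proof.
apply: (iffP forallP) => [u i j lt_ij same | u i].
  by move/forallP/(_ j)/implyP: (u i); apply; rewrite lt_ij /=; move: same; lia.
by apply/forallP => j; apply/implyP => /andP[lt_ij blk]; apply: u => //; lia.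
Qed.

Section LiftPermUnshuffle.
Variables (n : nat) (t : 'S_n) (j : 'I_n.+1).
Local Notation s := (lift_perm ord_max j t).

Lemma lift_permV_pivot : (s^-1)%g j = n :> nat.
Proof. by rewrite lift_permV lift_perm_id. Qed.

Lemma lift_permV_lift q : (s^-1)%g (lift j q) = (t^-1)%g q :> nat.
Proof. by rewrite lift_permV lift_perm_lift lift_max. Qed.

Variable k' : nat.

(* s^-1 sends j to the largest value n, so nothing may follow j in its block. *)
Lemma is_unsh_lift_pivot : is_unsh k' s -> (j == n :> nat) || (j.+1 == k').
Proof.
move/is_unshP=> u; apply/contraT; rewrite negb_or => /andP[j_n j_k].
have lt_jn : (j.+1 < n.+1)%N by move: j_n (ltn_ord j); lia.
have same : (j < k')%N = (j.+1 < k')%N by move: j_k; lia.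
have := u j (Ordinal lt_jn) (ltnSn j) same; rewrite lift_permV_pivot.
by rewrite ltnNge -ltnS ltn_ord.
Qed.

Variable k : nat.
Hypothesis lift_block : forall q : 'I_n, (lift j q < k')%N = (q < k)%N.

Lemma is_unsh_lift_restr : is_unsh k' s -> is_unsh k t.
Proof.
move/is_unshP=> u; apply/is_unshP => q1 q2 lt12 same.
rewrite -!lift_permV_lift; apply: u; by rewrite ?ltn_lift ?lift_block.
Qed.

Lemma is_unsh_lift_perm :
  (j == n :> nat) || (j.+1 == k') -> is_unsh k t -> is_unsh k' s.
Proof.
move=> j_last /is_unshP u; apply/is_unshP => p1 p2 lt12 same.
case: (unliftP j p1) => [q1 ->|->] in lt12 same *;
  case: (unliftP j p2) => [q2 ->|->] in lt12 same *.
- rewrite !lift_permV_lift; apply: u; first by rewrite -(ltn_lift j).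
  by rewrite -!lift_block.
- by rewrite lift_permV_lift lift_permV_pivot.
- by have := ltn_ord (lift j q2); move: j_last lt12 same; lia.
- by rewrite ltnn in lt12.
Qed.

End LiftPermUnshuffle.

Lemma is_unsh_lift n k (t : 'S_n) (j : 'I_n.+1) : (k < n)%N ->
  is_unsh k.+1 (lift_perm ord_max j t) =
  ((j == n :> nat) && is_unsh k.+1 t) || ((j == k :> nat) && is_unsh k t).
Proof.
move=> lt_kn.
have block_n (q : 'I_n) : (lift ord_max q < k.+1)%N = (q < k.+1)%N by rewrite lift_max.
have block_k : j = k :> nat -> forall q : 'I_n, (lift j q < k.+1)%N = (q < k)%N.
  by move=> jk q; rewrite /= /bump jk; case: leqP; lia.
have [j_n | j_n] := eqVneq j ord_max.
  subst j; rewrite /= eqxx (gtn_eqF lt_kn) orbF.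
  apply/idP/idP; first exact: is_unsh_lift_restr.
  by apply: is_unsh_lift_perm; rewrite ?eqxx.
have j_nF : (j == n :> nat) = false.
  by apply: contraNF j_n => /eqP jn; apply/eqP/val_inj.
rewrite j_nF; apply/idP/idP => [u | /andP[/eqP jk ut]].
  have := is_unsh_lift_pivot u; rewrite j_nF eqSS => /eqP jk.
  by rewrite jk eqxx (is_unsh_lift_restr (block_k jk) u).
by apply: (is_unsh_lift_perm (block_k jk)) ut; rewrite jk eqxx orbT.
Qed.

Lemma big_ord_pred1_cond (V : nmodType) m a (P : bool) (F : nat -> V) : (a < m)%N ->
  \sum_(j < m | (j == a :> nat) && P) F j = F a *+ P.
Proof.
move=> lt_am; case: P; last by rewrite big_pred0 // => j; rewrite andbF.
by rewrite (big_pred1 (Ordinal lt_am)) // => j; rewrite andbT.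
Qed.

Lemma big_ord_pred2_cond (V : nmodType) m a b (P Q : bool) (F : nat -> V) :
  (a < m)%N -> (b < m)%N -> a != b ->
  \sum_(j < m | ((j == a :> nat) && P) || ((j == b :> nat) && Q)) F j =
  F a *+ P + F b *+ Q.
Proof.
move=> lt_am lt_bm neq_ab; rewrite (bigID (fun j : 'I_m => j == a :> nat)) /=.
rewrite -(big_ord_pred1_cond _ _ lt_am) -(big_ord_pred1_cond _ _ lt_bm).
congr (_ + _); apply: eq_bigl => j.
all: by case: eqVneq => [->|] /=; rewrite ?andbT ?andbF ?(negbTE neq_ab) ?orbF.
Qed.

Section TensorPowers.
Variables (C : ASMC) (A : Ob C).
Let ax := asmc_ax C.

Lemma heq_castN a b a' b' (f : Mor C (pw A a) (pw A a')) :
  a = b -> a' = b' -> heq (@castN C A a b a' b' f) f.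
Proof.
move=> e e'; rewrite /castN.
case: eqP => [e1|//]; case: eqP => [e2|//]; exact: heq_castl.
Qed.

Lemma id_tens_sym_nn n : id_tens_sym A n n = idmor (pw A n.+1).
Proof.
apply: heq_eq; rewrite /id_tens_sym subnn.
apply: heq_trans (heq_castN _ (addn1 n) (addn0 n.+1)) _.
apply: heq_trans (heq_castl _ _ _) _.
rewrite -(tensm_id ax); exact: heq_tensm (heq_refl _) (heq_gam1l _).
Qed.

Lemma big_tensml I (r : seq I) (P : pred I) X X' Y Y'
    (F : I -> Mor C X X') (g : Mor C Y Y') :
  tensm (\sum_(i <- r | P i) F i) g = \sum_(i <- r | P i) tensm (F i) g.
Proof.
by apply: (big_morph (fun f => tensm f g)) => [f f'|]; rewrite ?(tensmDl ax) ?(tensm0l ax).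
Qed.

Lemma big_cmpl I (r : seq I) (P : pred I) X Y Z
    (F : I -> Mor C X Y) (g : Mor C Y Z) :
  cmp (\sum_(i <- r | P i) F i) g = \sum_(i <- r | P i) cmp (F i) g.
Proof.
by apply: (big_morph (fun f => cmp f g)) => [f f'|]; rewrite ?(compDl ax) ?(comp0l ax).
Qed.

Lemma symperm_lift n (t : 'S_n) (j : 'I_n.+1) :
  symperm A (lift_perm ord_max j t) =
  cmp (tensm (symperm A t) (idmor A)) (id_tens_sym A n j).
Proof.
by rewrite /= lift_perm_id restr_lift_perm.
Qed.

End TensorPowers.

Theorem proposition3p19 (C : ASMC) (A : Ob C) (n k : nat) :
  (1 <= n)%N -> (k <= n - 1)%N ->
  unsh A n.+1 k.+1 =
  tensm (unsh A n k.+1) (idmor A)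
  + cmp (tensm (unsh A n k) (idmor A)) (id_tens_sym A n k).
Proof.
move=> n_gt0 k_le; have lt_kn : (k < n)%N by lia.
pose G (t : 'S_n) (i : nat) := cmp (tensm (symperm A t) (idmor A)) (id_tens_sym A n i).
have -> : unsh A n.+1 k.+1 =
    \sum_(t : 'S_n) (G t n *+ is_unsh k.+1 t + G t k *+ is_unsh k t).
  rewrite /unsh big_perm_lift; apply: eq_bigr => t _.
  under eq_bigr do rewrite symperm_lift.
  rewrite (eq_bigl _ _ (is_unsh_lift t ^~ lt_kn)) (big_ord_pred2_cond _ _ (G t)) //.
  - exact: ltnW.
  - by rewrite gtn_eqF.
under eq_bigr do rewrite !mulrb.
rewrite big_split -!big_mkcond /unsh !big_tensml big_cmpl; congr (_ + _).
by apply: eq_bigr => t _; rewrite /G id_tens_sym_nn (comp_idr (asmc_ax C)).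
Qed.
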